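(* Let $T,\nu,M_t$ be integers with $\nu\ge 0$, $M_t\ge1$ and $T\ge M_t(\nu+1)$. Let $\alpha$ be a primitive element of $\mathbb{F}_{2^T}$, $\xi=\alpha^{\nu+1}$, and $(\theta_0,\dots,\theta_{T-1})$ the trace dual basis of $(\alpha^0,\dots,\alpha^{T-1})$. For $f_0\in\mathbb{F}_{2^T}$ let $f(x)=f_0x$ and let $\mathcal{S}=\{f_0\in\mathbb{F}_{2^T}:\ \mathrm{Tr}(\theta_if(\xi^j))=0\ \forall i\in\{T-\nu,\dots,T-1\},\ \forall j\in\{1,\dots,M_t\}\}$. Then $\frac{1}{T}\log_2|\mathcal{S}|\ge 1-\frac{\nu M_t}{T}$, and for every $f\in\mathcal{S}$ with $f_0\neq0$, $\operatorname{rank}_{\mathbb{F}_2}(\mathbf{U}_f)\ge M_t(\nu+1)$.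
   Context: $\mathrm{Tr}$ is the trace from $\mathbb{F}_{2^T}$ to $\mathbb{F}_2$; the trace dual basis satisfies $\mathrm{Tr}(\theta_i\alpha^j)=\delta_{ij}$. For $f$ let $\mathbf{c}_f=(f(1),f(\xi),\dots,f(\xi^{M_t-1}))^t\in\mathbb{F}_{2^T}^{M_t}$ and $\mathbf{u}_f=(\mathbf{c}_f^t,\alpha\mathbf{c}_f^t,\dots,\alpha^\nu\mathbf{c}_f^t)^t\in\mathbb{F}_{2^T}^{(\nu+1)M_t}$. $\mathbf{U}_f\in\mathbb{F}_2^{(\nu+1)M_t\times T}$ is the binary matrix whose $r$-th row is the coordinate vector of the $r$-th entry of $\mathbf{u}_f$ with respect to the basis $(\alpha^0,\alpha^1,\dots,\alpha^{T-1})$ of $\mathbb{F}_{2^T}$ over $\mathbb{F}_2$. *)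

From HB Require Import structures.
From mathcomp Require Import all_boot all_order all_algebra all_field.
From mathcomp Require Import all_classical all_reals all_analysis.
Set Implicit Arguments. Unset Strict Implicit. Unset Printing Implicit Defensive.
Import Order.TTheory GRing.Theory Num.Theory.
Local Open Scope ring_scope.

Definition trace2 (F : fieldType) (T : nat) (x : F) : F :=
  \sum_(k < T) x ^+ (2 ^ k).

(* The r-th entry of u_f = (c_f^t, alpha c_f^t, ..., alpha^nu c_f^t)^t, where
   c_f = (f(1), f(xi), ..., f(xi^(Mt-1))) and f(x) = f0 x.
   Row r = l * Mt + k (k < Mt, l <= nu) holds alpha^l * f(xi^k). *)
Definition uf_entry (F : fieldType) (Mt : nat) (alpha xi f0 : F) (r : nat) : F :=
  alpha ^+ (r %/ Mt) * (f0 * xi ^+ (r %% Mt)).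

Definition F2_to (F : fieldType) (b : 'F_2) : F := (nat_of_ord b)%:R.

Definition is_Uf (F : fieldType) (T nu Mt : nat) (alpha xi f0 : F)
  (U : 'M['F_2]_(nu.+1 * Mt, T)) : Prop :=
  forall r : 'I_(nu.+1 * Mt),
    uf_entry Mt alpha xi f0 r = \sum_(j < T) F2_to F (U r j) * alpha ^+ j.

Definition Sset (F : finFieldType) (T nu Mt : nat) (theta : 'I_T -> F) (xi : F)
  : {set F} :=
  [set f0 : F | [forall i : 'I_T, (T - nu <= i)%N ==>
       [forall j : 'I_Mt.+1, (0 < j)%N ==>
          (trace2 T (theta i * (f0 * xi ^+ j)) == 0)]]].

From HB Require Import structures.
From mathcomp Require Import all_boot all_order all_algebra all_field.
From mathcomp Require Import all_classical all_reals all_analysis.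
From mathcomp Require Import zify ring.
Import Order.TTheory GRing.Theory Num.Theory.
Local Open Scope ring_scope.

(* Over F = GF(2^T) the trace is additive with values in {0, 1}, so each of
   the nu * Mt linear conditions cutting out S at most halves the number of
   candidates: |S| >= 2^(T - nu Mt).  For the rank, the entries of u_f are
   f0 alpha^(l + (nu+1) k) with l <= nu and k < Mt; these exponents are
   distinct and below T.  A binary relation among the rows of U therefore
   becomes, after dividing by f0, a binary relation among distinct elements
   of the basis (alpha^j), and pairing with the trace-dual basis reads off
   each coefficient as 0. *)

Section Char2Trace.
Context {F : finFieldType} {T : nat}.
Hypothesis cardF : #|F| = (2 ^ T)%N.

Lemma pchar2_card : 2%N \in [pchar F].
Proof. exact: card_finPcharP cardF _. Qed.

Lemma exprD_pchar2 (k : nat) (x y : F) :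
  (x + y) ^+ (2 ^ k) = x ^+ (2 ^ k) + y ^+ (2 ^ k).
Proof.
by apply: exprDn_pchar; rewrite pnatX (pnatE _ (isT : prime 2)) pchar2_card.
Qed.

Lemma trace2D (x y : F) : trace2 T (x + y) = trace2 T x + trace2 T y.
Proof.
by rewrite /trace2 -big_split; apply: eq_bigr => k _; rewrite exprD_pchar2.
Qed.

Lemma trace2_sqr (x : F) : trace2 T x ^+ 2 = trace2 T x.
Proof.
have sqrD : {morph (fun z : F => z ^+ 2) : a b / a + b}.
  by move=> a b; exact: (exprD_pchar2 1).
have sqr0 : 0 ^+ 2 = 0 :> F by rewrite expr0n.
rewrite /trace2 (big_morph _ sqrD sqr0) /=.
case: T cardF => [|T'] cardF'; first by rewrite !big_ord0.
(* Squaring shifts the Frobenius powers; the last one wraps, as x^(2^T) = x. *)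
rewrite big_ord_recr big_ord_recl /= expn0 expr1 -exprM -expnSr -cardF'.
rewrite expf_card addrC; congr (_ + _).
by apply: eq_bigr => i _; rewrite -exprM -expnSr.
Qed.

Lemma trace2_01 (x : F) : trace2 T x = 0 \/ trace2 T x = 1.
Proof.
have : trace2 T x * (trace2 T x - 1) == 0.
  by rewrite mulrBr mulr1 -expr2 trace2_sqr subrr.
by rewrite mulf_eq0 subr_eq0 => /orP[] /eqP; [left | right].
Qed.

End Char2Trace.

Lemma trace2_0 (F : fieldType) (T : nat) : trace2 T (0 : F) = 0.
Proof. by rewrite /trace2 big1 // => k _; rewrite expr0n expn_eq0. Qed.

Lemma F2_cases (b : 'F_2) : b = 0 \/ b = 1.
Proof. by case: b => [[|[|//]] lt_b2]; [left | right]; apply: val_inj. Qed.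

Lemma trace2_F2_toMl (F : fieldType) (T : nat) (b : 'F_2) (y : F) :
  trace2 T (F2_to F b * y) = F2_to F b * trace2 T y.
Proof. by case: (F2_cases b) => ->; rewrite /F2_to /= ?mul0r ?trace2_0 ?mul1r. Qed.

Lemma F2_toM (F : fieldType) (a b : 'F_2) : F2_to F (a * b) = F2_to F a * F2_to F b.
Proof.
by case: (F2_cases a) => ->; case: (F2_cases b) => ->;
  rewrite /F2_to /= ?mul0r ?mulr0 ?mulr1.
Qed.

Lemma F2_to_eq0 (F : fieldType) (b : 'F_2) : (F2_to F b == 0) = (b == 0).
Proof. by case: (F2_cases b) => ->; rewrite /F2_to /= ?eqxx ?oner_eq0. Qed.

Section F2Embedding.
Context {F : fieldType}.
Hypothesis pchar2F : 2%N \in [pchar F].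

Lemma F2_toD (a b : 'F_2) : F2_to F (a + b) = F2_to F a + F2_to F b.
Proof.
case: (F2_cases a) => ->; case: (F2_cases b) => ->;
  by rewrite /F2_to /= ?add0r ?addr0 ?addrr_pchar2.
Qed.

Lemma F2_to_sum (I : finType) (c : I -> 'F_2) :
  F2_to F (\sum_i c i) = \sum_i F2_to F (c i).
Proof. exact: (big_morph _ F2_toD (erefl : F2_to F 0 = 0)). Qed.

End F2Embedding.

Section CommonZeros.
Context {F : finFieldType} {I : finType} (g : I -> F -> F).
Hypotheses (pchar2F : 2%N \in [pchar F])
  (gD : forall i x y, g i (x + y) = g i x + g i y)
  (g01 : forall i x, g i x = 0 \/ g i x = 1).

Definition common_zeros (P : {set I}) := [set x : F | [forall i in P, g i x == 0]].

Lemma common_zeros_setD1 (P : {set I}) (i0 : I) : i0 \in P ->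
  common_zeros P = common_zeros (P :\ i0) :&: [set x | g i0 x == 0].
Proof.
move=> i0P; apply/setP => x; rewrite !inE; apply/forall_inP/andP.
  move=> zP; split; last exact: zP.
  by apply/forall_inP => i; rewrite !inE => /andP[_]; apply: zP.
case=> /forall_inP zP' z0 i iP; have [->//|ne_i] := eqVneq i i0.
by apply: zP'; rewrite !inE ne_i.
Qed.

(* Translation by any x0 in the difference maps the difference into the
   intersection, since g i0 = 1 on both summands and 1 + 1 = 0. *)
Lemma card_common_zeros_setD_le (P : {set I}) (i0 : I) :
  (#|common_zeros P :\: [set x | g i0 x == 0%R]|
     <= #|common_zeros P :&: [set x | g i0 x == 0%R]|)%N.
Proof.
set B := [set x | _]; have [->|[x0 x0ZB]] := set_0Vmem (common_zeros P :\: B).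
  by rewrite cards0.
rewrite -(card_imset _ (addIr x0)); apply: subset_leq_card.
apply/fintype.subsetP => _ /imsetP[y yZB ->].
move: yZB x0ZB; rewrite !inE => /andP[yB yZ] /andP[x0B x0Z].
have g_eq1 z : g i0 z != 0 -> g i0 z = 1 by case: (g01 i0 z) => ->; rewrite ?eqxx.
rewrite gD (g_eq1 _ yB) (g_eq1 _ x0B) addrr_pchar2 // eqxx andbT.
apply/forall_inP => i iP; rewrite gD.
by move: yZ x0Z => /forall_inP/(_ _ iP)/eqP-> /forall_inP/(_ _ iP)/eqP->; rewrite addr0.
Qed.

Lemma card_le_exp2_common_zeros (P : {set I}) :
  (#|F| <= 2 ^ #|P| * #|common_zeros P|)%N.
Proof.
move cardP : #|P| => n; elim: n P cardP => [|n IHn] P cardP.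
  suff -> : common_zeros P = [set: F] by rewrite cardsT expn0 mul1n.
  apply/setP => x; rewrite !inE; apply/forall_inP => i iP.
  by move/card0_eq: cardP => /(_ i); rewrite iP.
have [i0 i0P] : exists i0, i0 \in P by apply/card_gt0P; rewrite cardP.
have cardP' : #|P :\ i0| = n by move: cardP; rewrite (cardsD1 i0) i0P add1n => -[].
have le_ZB := card_common_zeros_setD_le (P :\ i0) i0.
rewrite (common_zeros_setD1 _ _ i0P); apply: (leq_trans (IHn _ cardP')).
rewrite -(cardsID [set x | g i0 x == 0] (common_zeros (P :\ i0))) in le_ZB *.
by rewrite expnS; move: le_ZB; nia.
Qed.

End CommonZeros.

Lemma card_ord_geq (n m : nat) : (m <= n)%N ->
  #|[set i : 'I_n | (m <= i)%N]| = (n - m)%N.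
Proof.
move=> le_mn; rewrite -sum1_card big_mkcond /=.
under eq_bigr do rewrite inE.
rewrite -(big_mkord xpredT (fun i => if (m <= i)%N then 1%N else 0%N)).
rewrite (big_cat_nat (leq0n m) le_mn) /= big_nat_cond big1 ?add0n; last first.
  by move=> i /andP[/andP[_ lt_im] _]; rewrite leqNgt lt_im.
rewrite big_nat_cond (eq_bigr (fun _ => 1%N)); last by move=> i /andP[/andP[-> _] _].
by rewrite -big_nat_cond sum_nat_const_nat muln1.
Qed.

Lemma card_Sset_ge {F : finFieldType} {T : nat} (nu Mt : nat) (theta : 'I_T -> F) (xi : F) :
  #|F| = (2 ^ T)%N -> (nu <= T)%N ->
  (2 ^ T <= 2 ^ (nu * Mt) * #|@Sset F T nu Mt theta xi|)%N.
Proof.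
move=> cardF le_nu_T.
pose g (p : 'I_T * 'I_Mt.+1) (x : F) := trace2 T (theta p.1 * (x * xi ^+ p.2)).
pose A := [set i : 'I_T | (T - nu <= i)%N].
pose B := [set j : 'I_Mt.+1 | (1 <= j)%N].
have gD p x y : g p (x + y) = g p x + g p y.
  by rewrite /g mulrDl mulrDr trace2D.
have g01 p x : g p x = 0 \/ g p x = 1 by exact: trace2_01.
have := card_le_exp2_common_zeros g (pchar2_card cardF) gD g01 (finset.setX A B).
rewrite -cardF cardsX card_ord_geq ?leq_subr // subKn // card_ord_geq // subn1.
suff -> : common_zeros g (finset.setX A B) = @Sset F T nu Mt theta xi by [].
apply/setP => x; rewrite !inE; apply/forall_inP/forallP.
  move=> zAB i; apply/implyP => Ai; apply/forallP => j; apply/implyP => Bj.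
  by apply: (zAB (i, j)); rewrite finset.in_setX !inE Ai Bj.
move=> zS [i j]; rewrite finset.in_setX !inE => /andP[Ai Bj].
by move/(_ i): zS; rewrite Ai => /forallP/(_ j); rewrite Bj.
Qed.

Lemma dual_basis_coef_eq0 {F : finFieldType} {T : nat} {b theta : 'I_T -> F}
    {I : finType} {e : I -> 'I_T} {c : I -> 'F_2} :
  #|F| = (2 ^ T)%N -> (forall i j, trace2 T (theta i * b j) = (i == j)%:R) ->
  injective e -> \sum_i F2_to F (c i) * b (e i) = 0 -> forall i, c i = 0.
Proof.
move=> cardF dual inj_e sum0 i; apply/eqP; rewrite -(F2_to_eq0 F).
have := congr1 (fun x => trace2 T (theta (e i) * x)) sum0.
rewrite /= mulr0 trace2_0 mulr_sumr (big_morph _ (trace2D cardF) (trace2_0 _ _)).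
under eq_bigr => k _ do rewrite mulrCA trace2_F2_toMl dual.
rewrite (bigD1 i) //= eqxx mulr1 big1 ?addr0 => [->//|k ne_ki].
by rewrite (inj_eq inj_e) eq_sym (negbTE ne_ki) mulr0.
Qed.

Definition uf_exponent (nu Mt r : nat) := (r %/ Mt + nu.+1 * (r %% Mt))%N.

Lemma uf_entryE (F : fieldType) (nu Mt : nat) (alpha f0 : F) (r : nat) :
  uf_entry Mt alpha (alpha ^+ nu.+1) f0 r = f0 * alpha ^+ uf_exponent nu Mt r.
Proof. by rewrite /uf_entry /uf_exponent exprD exprM mulrCA. Qed.

Lemma uf_exponent_lt {nu Mt r : nat} : (0 < Mt)%N -> (r < nu.+1 * Mt)%N ->
  (uf_exponent nu Mt r < nu.+1 * Mt)%N.
Proof.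
move=> Mt_gt0 lt_r; rewrite /uf_exponent.
have : (r %/ Mt < nu.+1)%N by rewrite ltn_divLR.
have : (r %% Mt < Mt)%N by rewrite ltn_mod.
nia.
Qed.

Lemma uf_exponent_inj {nu Mt r r' : nat} : (0 < Mt)%N ->
  (r < nu.+1 * Mt)%N -> (r' < nu.+1 * Mt)%N ->
  uf_exponent nu Mt r = uf_exponent nu Mt r' -> r = r'.
Proof.
rewrite /uf_exponent => Mt_gt0 lt_r lt_r' eq_e.
have lt_q : (r %/ Mt < nu.+1)%N by rewrite ltn_divLR.
have lt_q' : (r' %/ Mt < nu.+1)%N by rewrite ltn_divLR.
have eq_q : (r %/ Mt = r' %/ Mt)%N.
  have := congr1 (modn^~ nu.+1) eq_e.
  by rewrite /= !(addnC (_ %/ Mt)%N) !(mulnC nu.+1) !modnMDl !modn_small.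
move: eq_e; rewrite eq_q => /addnI/eqP; rewrite eqn_mul2l /= => /eqP eq_m.
by rewrite (divn_eq r Mt) (divn_eq r' Mt) eq_q eq_m.
Qed.

Lemma sum_uf_entry_mulmx {F : fieldType} {T nu Mt : nat} {alpha xi f0 : F}
    {U : 'M['F_2]_(nu.+1 * Mt, T)} (v : 'rV['F_2]_(nu.+1 * Mt)) :
  2%N \in [pchar F] -> is_Uf alpha xi f0 U ->
  \sum_r F2_to F (v 0 r) * uf_entry Mt alpha xi f0 r
    = \sum_j F2_to F ((v *m U) 0 j) * alpha ^+ j.
Proof.
move=> pchar2F hU; under eq_bigr do rewrite hU mulr_sumr.
rewrite exchange_big; apply: eq_bigr => j _ /=.
under eq_bigr do rewrite mulrA -F2_toM.
by rewrite -mulr_suml -F2_to_sum // mxE.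
Qed.

Lemma rank_Uf {F : finFieldType} {T nu Mt : nat} {alpha f0 : F}
    {theta : 'I_T -> F} {U : 'M['F_2]_(nu.+1 * Mt, T)} :
  #|F| = (2 ^ T)%N -> (0 < Mt)%N -> (nu.+1 * Mt <= T)%N ->
  (forall i j : 'I_T, trace2 T (theta i * alpha ^+ j) = (i == j)%:R) ->
  f0 != 0 -> is_Uf alpha (alpha ^+ nu.+1) f0 U ->
  \rank U = (nu.+1 * Mt)%N.
Proof.
move=> cardF Mt_gt0 le_T dual f0_neq0 hU; apply/eqP/inj_row_free => v vU0.
pose e r : 'I_T :=
  Ordinal (leq_trans (uf_exponent_lt Mt_gt0 (ltn_ord r)) le_T).
have inj_e : injective e.
  move=> r r' /(congr1 val) /(uf_exponent_inj Mt_gt0 (ltn_ord r) (ltn_ord r')).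
  exact: val_inj.
have sum0 : \sum_r F2_to F (v 0 r) * alpha ^+ e r = 0.
  apply: (mulfI f0_neq0); rewrite mulr0 mulr_sumr.
  under eq_bigr do rewrite mulrCA -uf_entryE.
  rewrite (sum_uf_entry_mulmx _ (pchar2_card cardF) hU) vU0.
  by rewrite big1 // => j _; rewrite mxE mul0r.
apply/rowP => r; rewrite mxE.
exact: (dual_basis_coef_eq0 cardF dual inj_e sum0).
Qed.

Lemma one_sub_div_le_log2_div (R : realType) (T a s : nat) :
  (a <= T)%N -> (0 < T)%N -> (2 ^ (T - a) <= s)%N ->
  1 - a%:R / T%:R <= ln (s%:R : R) / ln 2 / T%:R.
Proof.
move=> le_aT T_gt0 le_s.
have ln_s_ge : (T - a)%:R * ln (2 : R) <= ln (s%:R : R).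
  rewrite mulrC mulr_natr -lnXn ?ltr0n // -natrX ler_ln ?ler_nat //.
    by rewrite posrE ltr0n expn_gt0.
  by rewrite posrE ltr0n (leq_trans _ le_s) // expn_gt0.
have ln2_gt0 : (0 : R) < ln 2 by apply: ln_gt0; rewrite ltr1n.
have -> : 1 - a%:R / T%:R = (T - a)%:R / (T%:R : R).
  by rewrite natrB // mulrBl divff // pnatr_eq0 -lt0n.
by rewrite ler_pM2r ?invr_gt0 ?ltr0n // ler_pdivlMr.
Qed.

Theorem theorem7 (R : realType) (F : finFieldType) (T nu Mt : nat)
  (alpha : F) (theta : 'I_T -> F)
  (hMt : (1 <= Mt)%N) (hT : (Mt * nu.+1 <= T)%N)
  (hcard : #|F| = (2 ^ T)%N)
  (halpha : (2 ^ T - 1)%N.-primitive_root alpha)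
  (htheta : forall i j : 'I_T,
      trace2 T (theta i * alpha ^+ j) = (i == j)%:R) :
  let xi := alpha ^+ nu.+1 in
  let S := @Sset F T nu Mt theta xi in
  ln (#|S|%:R : R) / ln 2 / T%:R >= 1 - (nu * Mt)%:R / T%:R
  /\ (forall f0 : F, f0 \in S -> f0 != 0 ->
       forall U : 'M['F_2]_(nu.+1 * Mt, T), @is_Uf F T nu Mt alpha xi f0 U ->
       (Mt * nu.+1 <= \rank U)%N).
Proof.
move=> xi S; have le_T : (nu.+1 * Mt <= T)%N by rewrite mulnC.
have le_nuMt_T : (nu * Mt <= T)%N by nia.
split.
  apply: one_sub_div_le_log2_div => //; first by nia.
  rewrite -(leq_pmul2l (expn_gt0 2 (nu * Mt))) -expnD subnKC //.
  by apply: card_Sset_ge hcard _; nia.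
move=> f0 _ f0_neq0 U hU.
by rewrite (rank_Uf hcard hMt le_T htheta f0_neq0 hU) mulnC.
Qed.
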